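(* Let $p$ be an odd prime and let $\alpha_1,\alpha_2,\beta_2,\beta_3,\gamma_1,\gamma_3\in p\mathbb{Z}_p$ be such that the free $\mathbb{Z}_p$-module $L_A$ with basis $x_1,x_2,x_3$ and alternating bilinear bracket $[x_1,x_2]=\alpha_1x_1+\alpha_2x_2$, $[x_2,x_3]=\beta_2x_2+\beta_3x_3$, $[x_3,x_1]=\gamma_1x_1+\gamma_3x_3$ is a $\mathbb{Z}_p$-Lie algebra. Then there exist $\eta,\rho,\mu,\lambda\in p\mathbb{Z}_p$ with $\eta\rho-\mu\lambda=0$ such that $L_A$ is isomorphic to one of the following $\mathbb{Z}_p$-Lie algebras, each free of rank $3$ on $x,y,z$ with the indicated brackets: (1) $L_1(\eta,\rho,\mu,\lambda)$: $[x,y]=\eta y$, $[y,z]=\mu y$, $[z,x]=\lambda z+\rho x$; (2) $L_2(\eta,\mu)$: $[x,y]=0$, $[y,z]=\eta y+\mu z$, $[z,x]=0$; (3) $L_3(\eta,\mu)$: $[x,y]=0$, $[y,z]=\eta z$, $[z,x]=\mu z$; (4) for $\eta\mu\lambda\ne0$, $L_4(\eta,\mu,\lambda)$: $[x,y]=\eta x+\mu y$, $[y,z]=\lambda y-\eta z$, $[z,x]=-\lambda x-\mu z$; (5) for $\eta\mu\lambda\ne0$, $L_\ast(\eta,\mu,\lambda)$: $[x,y]=\eta x+\mu y$, $[y,z]=\lambda y+\eta z$, $[z,x]=\lambda x+\mu z$. *)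

From HB Require Import structures.
From mathcomp Require Import all_boot all_order all_algebra.
Set Implicit Arguments. Unset Strict Implicit. Unset Printing Implicit Defensive.
Import Order.TTheory GRing.Theory Num.Theory.
Local Open Scope ring_scope.

(* p-adic integers Z_p, realised as the inverse limit lim Z/p^nZ:       *)
(* an element is a sequence of integers a with a (n+1) = a n mod p^n   *)
(* ("coherent"), two sequences being equal in Z_p iff a n = b n mod p^n *)
(* for all n.  Ring operations are pointwise.                           *)

Definition padic := nat -> int.

Definition ppow (p n : nat) : int := Posz (expn p n).

Definition is_padic (p : nat) (a : padic) : Prop :=
  forall n : nat, (a n.+1 = a n %[mod ppow p n])%Z.

Definition peq (p : nat) (a b : padic) : Prop :=
  forall n : nat, (a n = b n %[mod ppow p n])%Z.

Definition pconst (z : int) : padic := fun _ => z.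
Definition pzero : padic := pconst 0.
Definition padd (a b : padic) : padic := fun n => a n + b n.
Definition pmul (a b : padic) : padic := fun n => a n * b n.
Definition popp (a : padic) : padic := fun n => - a n.
Definition psub (a b : padic) : padic := padd a (popp b).

Definition in_pZp (p : nat) (a : padic) : Prop := (Posz p %| a 1%N)%Z.

(* Z_p-Lie algebras which are free of rank 3 with basis e_0,e_1,e_2,    *)
(* given by structure constants: c i j k = coefficient of e_k in        *)
(* [e_i, e_j].                                                           *)

Definition sconst := 'I_3 -> 'I_3 -> 'I_3 -> padic.

Definition vec3 (a b c : padic) : 'I_3 -> padic :=
  fun k => match nat_of_ord k with 0%N => a | 1%N => b | _ => c end.

Definition mk_sc (u v w : 'I_3 -> padic) : sconst :=
  fun i j k n =>
    match nat_of_ord i, nat_of_ord j with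
    | 0%N, 1%N => u k n | 1%N, 0%N => - u k n
    | 1%N, 2%N => v k n | 2%N, 1%N => - v k n
    | 2%N, 0%N => w k n | 0%N, 2%N => - w k n
    | _, _ => 0
    end.

(* Jacobi identity on basis elements:
   [e_i,[e_j,e_k]] + [e_j,[e_k,e_i]] + [e_k,[e_i,e_j]] = 0 *)
Definition jacobi (p : nat) (c : sconst) : Prop :=
  forall i j k l : 'I_3,
    peq p (fun n => \sum_(m < 3) (c j k m n * c i m l n
                                 + c k i m n * c j m l n
                                 + c i j m n * c k m l n))
          pzero.

(* Isomorphism of Z_p-Lie algebras: a Z_p-linear bijection phi with
   phi(e_i) = sum_k A i k f_k (A invertible over Z_p, inverse B)
   preserving the bracket. *)
Definition lie_iso (p : nat) (c d : sconst) : Prop :=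
  exists A B : 'I_3 -> 'I_3 -> padic,
    (forall i j, is_padic p (A i j) /\ is_padic p (B i j)) /\
    (forall i j, peq p (fun n => \sum_(k < 3) A i k n * B k j n)
                       (pconst (i == j)%:R)) /\
    (forall i j, peq p (fun n => \sum_(k < 3) B i k n * A k j n)
                       (pconst (i == j)%:R)) /\
    (forall i j l, peq p (fun n => \sum_(m < 3) c i j m n * A m l n)
                         (fun n => \sum_(k < 3) \sum_(k' < 3)
                                     A i k n * A j k' n * d k k' l n)).

(* The algebras of the statement, with basis (x1,x2,x3) resp. (x,y,z). *)
Definition LA (a1 a2 b2 b3 g1 g3 : padic) : sconst :=
  mk_sc (vec3 a1 a2 pzero) (vec3 pzero b2 b3) (vec3 g1 pzero g3).

Definition L1 (eta rho mu lam : padic) : sconst :=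
  mk_sc (vec3 pzero eta pzero) (vec3 pzero mu pzero) (vec3 rho pzero lam).

Definition L2 (eta mu : padic) : sconst :=
  mk_sc (vec3 pzero pzero pzero) (vec3 pzero eta mu) (vec3 pzero pzero pzero).

Definition L3 (eta mu : padic) : sconst :=
  mk_sc (vec3 pzero pzero pzero) (vec3 pzero pzero eta) (vec3 pzero pzero mu).

Definition L4 (eta mu lam : padic) : sconst :=
  mk_sc (vec3 eta mu pzero) (vec3 pzero lam (popp eta))
        (vec3 (popp lam) pzero (popp mu)).

Definition Lstar (eta mu lam : padic) : sconst :=
  mk_sc (vec3 eta mu pzero) (vec3 pzero lam eta) (vec3 lam pzero mu).

Definition pZp_elt (p : nat) (a : padic) : Prop := is_padic p a /\ in_pZp p a.

From HB Require Import structures.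
From mathcomp Require Import all_boot all_order all_algebra.
From mathcomp Require Import ring zify.
From Stdlib Require Import Classical.
Set Implicit Arguments. Unset Strict Implicit. Unset Printing Implicit Defensive.
Import Order.TTheory GRing.Theory Num.Theory.

(* The Jacobi identity for L_A reduces to three relations
     a1 b2 = b3 g1,   g3 b2 = g1 a2,   a1 g3 = a2 b3.
   If a1 = b3 = 0, L_A is literally L_1(a2, g1, b2, g3), the constraint
   a2 g1 = b2 g3 being the second relation.  The cyclic relabelling of the
   basis x1 -> x3 -> x2 -> x1 rotates the six constants and the relations,
   so the same applies when b2 = g1 = 0 or g3 = a2 = 0.  Otherwise, since
   Z_p is an integral domain, all six constants are nonzero, the relations
   give b3 g3 = a1 a2 and (g3 - a2)(g3 + a2) = 0, and L_A is L_*(a1,a2,g1)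
   (if g3 = a2) or L_4(a1,a2,b2) (if g3 = -a2).  For L_4 and L_* the
   parameter rho is a quotient eta rho = mu lam in p Z_p; it exists after
   rotating the parameter of least p-adic valuation into first position. *)

Lemma pexp_dvd_cancel (p a b u w : nat) : prime p ->
  p ^ (a + b) %| u * w -> ~~ (p ^ b %| u) -> p ^ a %| w.
Proof.
move=> p_pr; elim: b u => [|b IH] u; first by rewrite expn0 dvd1n.
move=> dvd_uw ndvd_u; have p_gt0 := prime_gt0 p_pr.
have [p_dvd_u|p_ndvd_u] := boolP (p %| u).
  rewrite -(divnK p_dvd_u) in dvd_uw ndvd_u.
  apply: (IH (u %/ p)); last by rewrite expnS mulnC dvdn_pmul2r in ndvd_u.
  by rewrite -(@dvdn_pmul2r p) // -mulnA (mulnC w) mulnA -expnSr -addnS.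
have cop : coprime (p ^ (a + b.+1)) u by rewrite coprimeXl // prime_coprime.
rewrite (Gauss_dvdr _ cop) in dvd_uw.
by apply: dvdn_trans dvd_uw; rewrite dvdn_exp2l // leq_addr.
Qed.

Local Open Scope ring_scope.

Definition pnull (p : nat) (f : padic) : Prop := forall n, (ppow p n %| f n)%Z.

Lemma eqz_modP (d x y : int) : (x = y %[mod d])%Z <-> (d %| x - y)%Z.
Proof. by rewrite -eqz_mod_dvd; split => [->|/eqP]. Qed.

Lemma peq_pnull p a b : peq p a b <-> pnull p (fun n => a n - b n).
Proof. by split => H n; apply/eqz_modP; apply: H. Qed.

Lemma is_padic_pnull p a : is_padic p a <-> forall n, (ppow p n %| a n.+1 - a n)%Z.
Proof. by split => H n; apply/eqz_modP; apply: H. Qed.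

Lemma pnull_opp p f : pnull p f -> pnull p (fun n => - f n).
Proof. by move=> hf n; rewrite rpredN. Qed.

Lemma pnull_ext p f g : pnull p f -> (forall n, g n = f n) -> pnull p g.
Proof. by move=> hf E n; rewrite E. Qed.

Lemma pnull_comb p f g (u v h : padic) : pnull p f -> pnull p g ->
  (forall n, h n = u n * f n + v n * g n) -> pnull p h.
Proof. by move=> hf hg E n; rewrite E; apply: rpredD; apply: dvdz_mull. Qed.

Lemma ppowD p a b : ppow p (a + b) = ppow p a * ppow p b.
Proof. by rewrite /ppow expnD PoszM. Qed.

Lemma ppow1 p : ppow p 1 = Posz p.
Proof. by rewrite /ppow expn1. Qed.

Lemma ppow_neq0 p k : prime p -> ppow p k != 0.
Proof. by move=> p_pr; rewrite /ppow eqz_nat expn_eq0 negb_and -lt0n prime_gt0. Qed.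

Lemma ppow_dvd p n m : (ppow p n %| ppow p (n + m))%Z.
Proof. by rewrite ppowD dvdz_mulr. Qed.

Lemma is_padic_coherent p x : is_padic p x ->
  forall n m, (ppow p n %| x (n + m)%N - x n)%Z.
Proof.
move/is_padic_pnull=> x_coh n; elim=> [|m IH]; first by rewrite addn0 subrr dvdz0.
have -> : x (n + m.+1)%N - x n = (x (n + m).+1 - x (n + m)%N) + (x (n + m)%N - x n).
  by rewrite addnS; ring.
by apply: rpredD => //; apply: dvdz_trans (ppow_dvd p n m) (x_coh _).
Qed.

Lemma padic_add p a b : is_padic p a -> is_padic p b -> is_padic p (padd a b).
Proof.
move=> /is_padic_pnull ha /is_padic_pnull hb; apply/is_padic_pnull => n.
have -> : padd a b n.+1 - padd a b n = (a n.+1 - a n) + (b n.+1 - b n).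
  by rewrite /padd; ring.
exact: rpredD.
Qed.

Lemma padic_opp p a : is_padic p a -> is_padic p (popp a).
Proof.
move=> /is_padic_pnull ha; apply/is_padic_pnull => n.
by rewrite /popp -opprD rpredN.
Qed.

Lemma padic_mul p a b : is_padic p a -> is_padic p b -> is_padic p (pmul a b).
Proof.
move=> /is_padic_pnull ha /is_padic_pnull hb; apply/is_padic_pnull => n.
have -> : pmul a b n.+1 - pmul a b n
          = a n.+1 * (b n.+1 - b n) + (a n.+1 - a n) * b n by rewrite /pmul; ring.
by apply: rpredD; [apply: dvdz_mull | apply: dvdz_mulr].
Qed.

Lemma padic_domain p x y : prime p -> is_padic p x -> is_padic p y ->
  pnull p (pmul x y) -> pnull p x \/ pnull p y.
Proof.
move=> p_pr hx hy hxy; have [|/not_all_ex_not [n0 ndvd_x]] := classic (pnull p x).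
  by left.
right=> n.
have ndvd_x' : ~~ (ppow p n0 %| x (n + n0)%N)%Z.
  apply/negP=> dvd_x; apply: ndvd_x.
  have -> : x n0 = x (n0 + n)%N - (x (n0 + n)%N - x n0) by ring.
  by rewrite addnC in dvd_x; apply: rpredB => //; apply: is_padic_coherent.
have dvd_y : (ppow p n %| y (n + n0)%N)%Z.
  move: (hxy (n + n0)%N) ndvd_x'; rewrite /pmul !dvdzE abszM /ppow /=.
  exact: pexp_dvd_cancel.
have -> : y n = y (n + n0)%N - (y (n + n0)%N - y n) by ring.
by apply: rpredB => //; apply: is_padic_coherent.
Qed.

Lemma pnull_mul_cancel p x y : prime p -> is_padic p x -> is_padic p y ->
  pnull p (pmul x y) -> ~ pnull p x -> pnull p y.
Proof. by move=> p_pr hx hy hxy nx; case: (padic_domain p_pr hx hy hxy). Qed.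

Definition punit (p : nat) (u : padic) : Prop :=
  is_padic p u /\ ~~ (Posz p %| u 1%N)%Z.

Lemma padic_valuation p x : prime p -> is_padic p x -> ~ pnull p x ->
  exists k u, punit p u /\ pnull p (fun n => x n - ppow p k * u n).
Proof.
move=> p_pr hx /not_all_ex_not [n0 /negP hn0].
have [N ndvd_N N_min] := ex_minnP (ex_intro (fun n => ~~ (ppow p n %| x n)%Z) n0 hn0).
have N_gt0 : (0 < N)%N.
  by case: N ndvd_N {N_min} => //; rewrite /ppow expn0 dvd1z.
set k := N.-1.
have dvd_xk : (ppow p k %| x k)%Z.
  by apply/negPn/negP => /N_min; rewrite /k; lia.
have dvd_x : forall m, (ppow p k %| x (m + k)%N)%Z.
  move=> m; have -> : x (m + k)%N = x (k + m)%N - x k + x k by rewrite addnC; ring.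
  by apply: rpredD => //; apply: is_padic_coherent.
have xE n : ppow p k * (x (n + k)%N %/ ppow p k)%Z = x (n + k)%N.
  by rewrite mulrC divzK.
exists k, (fun n => (x (n + k)%N %/ ppow p k)%Z); split; first split.
- apply/is_padic_pnull => n.
  rewrite -(@dvdz_mul2l (ppow p k)) ?ppow_neq0 // mulrBr !xE -ppowD.
  by rewrite addSn -addn1 (addnC k n); apply: is_padic_coherent.
- apply/negP => dvd_u; move/negP: ndvd_N; apply.
  have -> : N = (1 + k)%N by rewrite /k add1n prednK.
  by rewrite -xE ppowD ppow1 mulrC; apply: dvdz_mul dvd_u (dvdzz _).
- move=> n; rewrite xE -opprB rpredN.
  exact: is_padic_coherent.
Qed.

(* Units of Z_p are invertible: the inverse is assembled from Bezout
   coefficients modulo each p^n. *)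
Lemma punit_inv p u : prime p -> punit p u ->
  exists w, is_padic p w /\ pnull p (fun n => u n * w n - 1).
Proof.
move=> p_pr [hu ndvd_u].
have cop n : coprimez (u n) (ppow p n).
  case: n => [|n]; first by rewrite /ppow expn0 coprimezE coprimen1.
  rewrite coprimezE /ppow /= coprime_pexpr // coprime_sym prime_coprime //.
  apply: contra ndvd_u; rewrite -[X in (X %| _)%N]/(`|Posz p|%N) -dvdzE => dvd_u.
  have -> : u 1%N = u (1 + n)%N - (u (1 + n)%N - u 1%N) by ring.
  by apply: rpredB; rewrite // -ppow1; apply: is_padic_coherent.
pose w n := (egcdz (u n) (ppow p n)).1.
have w_inv n : (ppow p n %| u n * w n - 1)%Z.
  rewrite /w; case: (egcdzP (u n) (ppow p n)) => a b E _ /=.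
  rewrite (eqP (cop n)) in E.
  have -> : u n * a - 1 = - (b * ppow p n) by rewrite -E; ring.
  by rewrite rpredN dvdz_mull.
exists w; split => //; apply/is_padic_pnull => n.
have cop' : coprimez (ppow p n) (u n) by rewrite coprimez_sym.
rewrite -(Gauss_dvdzr _ cop').
have -> : u n * (w n.+1 - w n) =
   (u n.+1 * w n.+1 - 1) - (u n.+1 - u n) * w n.+1 - (u n * w n - 1) by ring.
apply: rpredB; last exact: w_inv.
apply: rpredB; last by apply: dvdz_mulr; rewrite -addn1; apply: is_padic_coherent.
by apply: dvdz_trans (w_inv _); rewrite -addn1; apply: ppow_dvd.
Qed.

Lemma peq_psub0 p a b : peq p (psub a b) pzero <-> pnull p (fun n => a n - b n).
Proof.
rewrite peq_pnull; split=> H n; have := H n;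
  by rewrite /psub /padd /popp /pzero /pconst subr0.
Qed.

Definition pZp_quotient (p : nat) (x y z : padic) : Prop :=
  exists rho, pZp_elt p rho /\ peq p (psub (pmul x rho) (pmul y z)) pzero.

(* If x = p^kx ux with ux a unit, y = p^ky uy, z = p^kz uz, kx <= ky, kz
   and ky >= 1, then rho = p^(ky + kz - kx) uy uz ux^-1 is the quotient. *)
Lemma pZp_quotient_of_valuations p x y z kx ky kz ux uy uz wx :
  is_padic p uy -> is_padic p uz -> is_padic p wx ->
  pnull p (fun n => x n - ppow p kx * ux n) ->
  pnull p (fun n => y n - ppow p ky * uy n) ->
  pnull p (fun n => z n - ppow p kz * uz n) ->
  pnull p (fun n => ux n * wx n - 1) ->
  (kx <= ky)%N -> (kx <= kz)%N -> (1 <= ky)%N -> pZp_quotient p x y z.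
Proof.
move=> huy huz hwx Hx Hy Hz Hw le_xy le_xz ky_gt0.
set e := (ky + kz - kx)%N.
exists (pmul (pconst (ppow p e)) (pmul (pmul uy uz) wx)); split; first split.
- by apply: padic_mul; [move=> n | apply: padic_mul => //; apply: padic_mul].
- rewrite /in_pZp /pmul /pconst; apply: dvdz_mulr.
  by rewrite dvdzE /ppow /=; apply: dvdn_exp => //; rewrite /e; lia.
have e_val : ppow p kx * ppow p e = ppow p ky * ppow p kz.
  by rewrite -!ppowD /e; congr ppow; lia.
apply/peq_psub0 => n; rewrite /pmul /pconst.
have -> : x n * (ppow p e * (uy n * uz n * wx n)) - y n * z n =
  (x n - ppow p kx * ux n) * (ppow p e * (uy n * uz n * wx n))
  + (ppow p kx * ppow p e) * (uy n * uz n) * (ux n * wx n - 1)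
  - (y n - ppow p ky * uy n) * z n
  - ppow p ky * uy n * (z n - ppow p kz * uz n)
  + (ppow p kx * ppow p e - ppow p ky * ppow p kz) * (uy n * uz n) by ring.
rewrite e_val subrr mul0r addr0.
apply: rpredB; last exact: dvdz_mull.
apply: rpredB; last exact: dvdz_mulr.
by apply: rpredD; [apply: dvdz_mulr | apply: dvdz_mull].
Qed.

Lemma pZp_valuation_pos p y k u : pZp_elt p y ->
  pnull p (fun n => y n - ppow p k * u n) -> ~~ (Posz p %| u 1%N)%Z -> (1 <= k)%N.
Proof.
move=> [_ dvd_y] Hy; case: k Hy => // Hy; apply: contraR => _.
have := Hy 1%N; rewrite ppow1 /ppow expn0 mul1r => dvd_yu.
have -> : u 1%N = y 1%N - (y 1%N - u 1%N) by ring.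
exact: rpredB.
Qed.

(* Among three nonzero elements of p Z_p, the one of least valuation
   divides the product of the other two, with quotient in p Z_p. *)
Lemma pZp_quotient_cyclic p x y z : prime p ->
  pZp_elt p x -> pZp_elt p y -> pZp_elt p z ->
  ~ pnull p x -> ~ pnull p y -> ~ pnull p z ->
  [\/ pZp_quotient p x y z, pZp_quotient p y z x | pZp_quotient p z x y].
Proof.
move=> p_pr hx hy hz nx ny nz.
have [kx [ux [ux_unit Hx]]] := padic_valuation p_pr hx.1 nx.
have [ky [uy [uy_unit Hy]]] := padic_valuation p_pr hy.1 ny.
have [kz [uz [uz_unit Hz]]] := padic_valuation p_pr hz.1 nz.
have [wx [hwx Hwx]] := punit_inv p_pr ux_unit.
have [wy [hwy Hwy]] := punit_inv p_pr uy_unit.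
have [wz [hwz Hwz]] := punit_inv p_pr uz_unit.
have kx_gt0 := pZp_valuation_pos hx Hx ux_unit.2.
have ky_gt0 := pZp_valuation_pos hy Hy uy_unit.2.
have kz_gt0 := pZp_valuation_pos hz Hz uz_unit.2.
have [/andP [? ?]|?] := boolP ((kx <= ky) && (kx <= kz))%N.
  by apply: Or31; apply: (pZp_quotient_of_valuations uy_unit.1 uz_unit.1 hwx Hx Hy Hz Hwx).
have [/andP [? ?]|?] := boolP ((ky <= kz) && (ky <= kx))%N.
  by apply: Or32; apply: (pZp_quotient_of_valuations uz_unit.1 ux_unit.1 hwy Hy Hz Hx Hwy).
by apply: Or33; apply: (pZp_quotient_of_valuations ux_unit.1 uy_unit.1 hwz Hz Hx Hy Hwz); lia.
Qed.

Lemma sum_kronecker (R : nzRingType) (n : nat) (F : 'I_n -> R) (a : 'I_n) :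
  \sum_(k < n) (a == k)%:R * F k = F a.
Proof.
rewrite (bigD1 a) //= eqxx mul1r big1 ?addr0 // => k /negbTE.
by rewrite eq_sym => ->; rewrite mul0r.
Qed.

Lemma lie_iso_refl p (c : sconst) : lie_iso p c c.
Proof.
exists (fun i k => pconst (i == k)%:R), (fun i k => pconst (i == k)%:R).
split; first by move=> i j.
do 2 (split; first by move=> i j n; rewrite /pconst sum_kronecker).
move=> i j l n; rewrite /pconst.
under eq_bigr do rewrite mulrC eq_sym.
under [in RHS]eq_bigr do under eq_bigr do rewrite -mulrA.
under [in RHS]eq_bigr do rewrite -mulr_sumr sum_kronecker.
by rewrite !sum_kronecker.
Qed.

Lemma lie_iso_relabel p (c c' d : sconst) (s : 'I_3 -> 'I_3) : injective s ->
  (forall i j l, peq p (c i j l) (c' (s i) (s j) (s l))) ->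
  lie_iso p c' d -> lie_iso p c d.
Proof.
move=> s_inj Hc [A [B [hAB [AB [BA Abr]]]]].
exists (fun i k => A (s i) k), (fun i k => B i (s k)).
split; first by move=> i j; split; [apply: (hAB _ _).1 | apply: (hAB _ _).2].
split; first by move=> i j; rewrite -(inj_eq s_inj); apply: AB.
split; first by move=> i j n; have := BA i j n; rewrite (reindex_inj s_inj).
move=> i j l n; rewrite -(Abr (s i) (s j) l n) /=.
rewrite [in RHS](reindex_inj s_inj); apply/eqz_modP.
rewrite -sumrB; apply: rpred_sum => m _; rewrite -mulrBl; apply: dvdz_mulr.
by apply/eqz_modP; apply: Hc.
Qed.

Definition classified (p : nat) (c : sconst) : Prop :=
  exists eta rho mu lam : padic,
    pZp_elt p eta /\ pZp_elt p rho /\ pZp_elt p mu /\ pZp_elt p lam /\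
    peq p (psub (pmul eta rho) (pmul mu lam)) pzero /\
    (lie_iso p c (L1 eta rho mu lam) \/
     lie_iso p c (L2 eta mu) \/
     lie_iso p c (L3 eta mu) \/
     (~ peq p (pmul eta (pmul mu lam)) pzero /\ lie_iso p c (L4 eta mu lam)) \/
     (~ peq p (pmul eta (pmul mu lam)) pzero /\ lie_iso p c (Lstar eta mu lam))).

Lemma classified_relabel p (c c' : sconst) (s : 'I_3 -> 'I_3) : injective s ->
  (forall i j l, peq p (c i j l) (c' (s i) (s j) (s l))) ->
  classified p c' -> classified p c.
Proof.
move=> s_inj Hc [eta [rho [mu [lam [h1 [h2 [h3 [h4 [h5 H]]]]]]]]].
exists eta, rho, mu, lam; do 5 (split; first done).
have R := lie_iso_relabel s_inj Hc.
case: H => [?|[?|[?|[[? ?]|[? ?]]]]];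
  [left | right; left | do 2 right; left | do 3 right; left | do 4 right];
  by do ?split => //; apply: R.
Qed.

Lemma LA_rotate a1 a2 b2 b3 g1 g3 i j l :
  LA a1 a2 b2 b3 g1 g3 i j l
  = LA b2 b3 g3 g1 a2 a1 (ord_pred i) (ord_pred j) (ord_pred l).
Proof.
by case: i => [[|[|[|i]]] Hi] //; case: j => [[|[|[|j]]] Hj] //;
   case: l => [[|[|[|l]]] Hl].
Qed.

Lemma peq_opp p a b : peq p a b -> peq p (popp a) (popp b).
Proof. by move=> h n; rewrite /popp -modzNm h modzNm. Qed.

Lemma pnull_peq0 p a : pnull p a -> peq p a pzero.
Proof. by move=> h; apply/peq_pnull => n; rewrite /pzero /pconst subr0. Qed.

Lemma vec3_peq p a b c a' b' c' : peq p a a' -> peq p b b' -> peq p c c' ->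
  forall k, peq p (vec3 a b c k) (vec3 a' b' c' k).
Proof. by move=> ha hb hc [[|[|[|k]]] Hk]. Qed.

Lemma mk_sc_peq p u v w u' v' w' : (forall k, peq p (u k) (u' k)) ->
  (forall k, peq p (v k) (v' k)) -> (forall k, peq p (w k) (w' k)) ->
  forall i j l, peq p (mk_sc u v w i j l) (mk_sc u' v' w' i j l).
Proof.
move=> hu hv hw [[|[|[|i]]] Hi] [[|[|[|j]]] Hj] l n //=;
  by [apply: hu | apply: hv | apply: hw
     | apply: (peq_opp (hu l)) | apply: (peq_opp (hv l)) | apply: (peq_opp (hw l))].
Qed.

Lemma LA_peq p a1 a2 b2 b3 g1 g3 a1' a2' b2' b3' g1' g3' :
  peq p a1 a1' -> peq p a2 a2' -> peq p b2 b2' ->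
  peq p b3 b3' -> peq p g1 g1' -> peq p g3 g3' ->
  forall i j l, peq p (LA a1 a2 b2 b3 g1 g3 i j l) (LA a1' a2' b2' b3' g1' g3' i j l).
Proof. by move=> *; apply: mk_sc_peq; apply: vec3_peq. Qed.

Lemma lie_iso_of_peq p (c d : sconst) :
  (forall i j l, peq p (c i j l) (d i j l)) -> lie_iso p c d.
Proof. by move=> H; apply: (lie_iso_relabel (@inj_id _) H); apply: lie_iso_refl. Qed.

Lemma classified_LA_peq p a1 a2 b2 b3 g1 g3 a1' a2' b2' b3' g1' g3' :
  peq p a1 a1' -> peq p a2 a2' -> peq p b2 b2' ->
  peq p b3 b3' -> peq p g1 g1' -> peq p g3 g3' ->
  classified p (LA a1' a2' b2' b3' g1' g3') -> classified p (LA a1 a2 b2 b3 g1 g3).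
Proof. by move=> h1 h2 h3 h4 h5 h6; apply: (classified_relabel (@inj_id _)); apply: LA_peq. Qed.

Lemma classified_LA_rotate p a1 a2 b2 b3 g1 g3 :
  classified p (LA b2 b3 g3 g1 a2 a1) -> classified p (LA a1 a2 b2 b3 g1 g3).
Proof.
apply: (classified_relabel (@ord_pred_inj 3)) => i j l n.
by rewrite LA_rotate.
Qed.

Definition LA_jacobi_eqs p (a1 a2 b2 b3 g1 g3 : padic) : Prop :=
  [/\ pnull p (fun n => a1 n * b2 n - b3 n * g1 n),
      pnull p (fun n => g3 n * b2 n - g1 n * a2 n) &
      pnull p (fun n => a1 n * g3 n - a2 n * b3 n)].

Lemma jacobi_LA p a1 a2 b2 b3 g1 g3 :
  jacobi p (LA a1 a2 b2 b3 g1 g3) -> LA_jacobi_eqs p a1 a2 b2 b3 g1 g3.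
Proof.
move=> HJ; pose J l := HJ (@Ordinal 3 0 isT) (@Ordinal 3 1 isT) (@Ordinal 3 2 isT) l.
by split; [move/peq_pnull: (J (@Ordinal 3 0 isT))
         | move/peq_pnull: (J (@Ordinal 3 1 isT))
         | move/peq_pnull: (J (@Ordinal 3 2 isT))];
   move/pnull_ext; apply=> n;
   rewrite !big_ord_recl big_ord0 /LA /mk_sc /vec3 /pzero /pconst /=; ring.
Qed.

Lemma LA_jacobi_eqs_rotate p a1 a2 b2 b3 g1 g3 :
  LA_jacobi_eqs p a1 a2 b2 b3 g1 g3 -> LA_jacobi_eqs p b2 b3 g3 g1 a2 a1.
Proof.
case=> J1 J2 J3; split=> //.
- by move/pnull_ext: J2; apply=> n; ring.
- by move/pnull_ext: J1; apply=> n; ring.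
Qed.

Lemma pnull_factor p x y f g (u v : padic) : prime p ->
  is_padic p x -> is_padic p y -> ~ pnull p x -> pnull p f -> pnull p g ->
  (forall n, x n * y n = u n * f n + v n * g n) -> pnull p y.
Proof.
move=> p_pr hx hy nx hf hg E; apply: (pnull_mul_cancel p_pr hx hy _ nx).
exact: pnull_comb hf hg E.
Qed.

(* If a1 = b3 = 0 then L_A = L_1(a2, g1, b2, g3), and the second Jacobi
   relation is the constraint a2 g1 = b2 g3. *)
Lemma classified_degenerate p a1 a2 b2 b3 g1 g3 :
  pZp_elt p a2 -> pZp_elt p b2 -> pZp_elt p g1 -> pZp_elt p g3 ->
  pnull p a1 -> pnull p b3 -> LA_jacobi_eqs p a1 a2 b2 b3 g1 g3 ->
  classified p (LA a1 a2 b2 b3 g1 g3).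
Proof.
move=> ha2 hb2 hg1 hg3 z1 z3 [_ J2 _].
exists a2, g1, b2, g3; do 4 (split; first done); split.
  by apply/peq_psub0; move/pnull_opp/pnull_ext: J2; apply=> n; rewrite /pmul; ring.
left; apply: lie_iso_of_peq; apply: LA_peq; rewrite //; exact: pnull_peq0.
Qed.

Lemma LA_nondegenerate p a1 a2 b2 b3 g1 g3 : prime p ->
  is_padic p a1 -> is_padic p a2 -> is_padic p b2 ->
  is_padic p b3 -> is_padic p g1 -> is_padic p g3 ->
  LA_jacobi_eqs p a1 a2 b2 b3 g1 g3 ->
  ~ (pnull p a1 /\ pnull p b3) -> ~ (pnull p b2 /\ pnull p g1) ->
  ~ (pnull p g3 /\ pnull p a2) -> ~ pnull p a1 /\ ~ pnull p b3.
Proof.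
move=> p_pr ha1 ha2 hb2 hb3 hg1 hg3 [J1 J2 J3] n13 n21 n32.
have na1 : ~ pnull p a1.
  move=> z1; have nb3 : ~ pnull p b3 by move=> z3; apply: n13.
  have zg1 : pnull p g1.
    by apply: (pnull_factor (u := pconst (-1)) (v := b2) p_pr hb3 hg1 nb3 J1 z1)
       => n; rewrite /pconst; ring.
  have nb2 : ~ pnull p b2 by move=> z2; apply: n21.
  have zg3 : pnull p g3.
    by apply: (pnull_factor (u := pconst 1) (v := a2) p_pr hb2 hg3 nb2 J2 zg1)
       => n; rewrite /pconst; ring.
  have na2 : ~ pnull p a2 by move=> z2; apply: n32.
  apply: nb3; apply: (pnull_factor (u := pconst (-1)) (v := a1) p_pr ha2 hb3 na2 J3 zg3)
    => n; rewrite /pconst; ring.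
split=> // z3.
have zb2 : pnull p b2.
  by apply: (pnull_factor (u := pconst 1) (v := g1) p_pr ha1 hb2 na1 J1 z3)
     => n; rewrite /pconst; ring.
have ng1 : ~ pnull p g1 by move=> z1; apply: n21.
have za2 : pnull p a2.
  by apply: (pnull_factor (u := pconst (-1)) (v := g3) p_pr hg1 ha2 ng1 J2 zb2)
     => n; rewrite /pconst; ring.
have ng3 : ~ pnull p g3 by move=> z; apply: n32.
apply: ng3; apply: (pnull_factor (u := pconst 1) (v := b3) p_pr ha1 hg3 na1 J3 za2)
  => n; rewrite /pconst; ring.
Qed.

Lemma peq_oppK p a : peq p a (popp (popp a)).
Proof. by move=> n; rewrite /popp opprK. Qed.

Lemma pZp_elt_opp p x : pZp_elt p x -> pZp_elt p (popp x).
Proof. by case=> hx dvd_x; split; [apply: padic_opp | rewrite /in_pZp /popp rpredN]. Qed.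

Lemma pnull_oppN p x : ~ pnull p x -> ~ pnull p (popp x).
Proof. by move=> nx /pnull_opp/pnull_ext x0; apply: nx; apply: x0 => n; rewrite /popp opprK. Qed.

Lemma pmul3_nonzero p x y z : prime p ->
  pZp_elt p x -> pZp_elt p y -> pZp_elt p z ->
  ~ pnull p x -> ~ pnull p y -> ~ pnull p z -> ~ peq p (pmul x (pmul y z)) pzero.
Proof.
move=> p_pr [hx _] [hy _] [hz _] nx ny nz /peq_pnull xyz0.
have /(pnull_mul_cancel p_pr hx (padic_mul hy hz)) yz0 : pnull p (pmul x (pmul y z)).
  by move/pnull_ext: xyz0; apply=> n; rewrite /pzero /pconst subr0.
exact: nz (pnull_mul_cancel p_pr hy hz (yz0 nx) ny).
Qed.

Lemma classified_Lstar_base p e m l : prime p ->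
  pZp_elt p e -> pZp_elt p m -> pZp_elt p l ->
  ~ pnull p e -> ~ pnull p m -> ~ pnull p l ->
  pZp_quotient p e m l -> classified p (Lstar e m l).
Proof.
move=> p_pr he hm hl ne nm nl [r [hr Hr]].
exists e, r, m, l; do 5 (split; first done).
by do 4 right; split; [apply: pmul3_nonzero | apply: lie_iso_refl].
Qed.

Lemma classified_L4_base p e m l : prime p ->
  pZp_elt p e -> pZp_elt p m -> pZp_elt p l ->
  ~ pnull p e -> ~ pnull p m -> ~ pnull p l ->
  pZp_quotient p e m l -> classified p (L4 e m l).
Proof.
move=> p_pr he hm hl ne nm nl [r [hr Hr]].
exists e, r, m, l; do 5 (split; first done).
by do 3 right; left; split; [apply: pmul3_nonzero | apply: lie_iso_refl].
Qed.

(* Rotating the basis permutes the parameters of L_* cyclically, so the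
   parameter of least valuation can be moved to the first position. *)
Lemma classified_Lstar p e m l : prime p ->
  pZp_elt p e -> pZp_elt p m -> pZp_elt p l ->
  ~ pnull p e -> ~ pnull p m -> ~ pnull p l -> classified p (Lstar e m l).
Proof.
move=> p_pr he hm hl ne nm nl.
case: (pZp_quotient_cyclic p_pr he hm hl ne nm nl) => Q.
- exact: classified_Lstar_base.
- by do 2 apply: classified_LA_rotate; apply: classified_Lstar_base Q.
- by apply: classified_LA_rotate; apply: classified_Lstar_base Q.
Qed.

(* For L_4 the rotation also changes signs: L_4(e, m, l) relabels to
   L_4(l, -e, -m). *)
Lemma classified_L4 p e m l : prime p ->
  pZp_elt p e -> pZp_elt p m -> pZp_elt p l ->
  ~ pnull p e -> ~ pnull p m -> ~ pnull p l -> classified p (L4 e m l).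
Proof.
move=> p_pr he hm hl ne nm nl.
have hNe := pZp_elt_opp he; have hNm := pZp_elt_opp hm; have hNl := pZp_elt_opp hl.
have nNe := pnull_oppN ne; have nNm := pnull_oppN nm; have nNl := pnull_oppN nl.
case: (pZp_quotient_cyclic p_pr he hm hl ne nm nl) => [Q|[r [hr Hr]]|[r [hr Hr]]].
- exact: classified_L4_base.
- do 2 apply: classified_LA_rotate.
  apply: (classified_LA_peq _ _ _ (@peq_oppK _ m) _ (@peq_oppK _ l)) => //.
  apply: classified_L4_base => //; exists r; split=> //.
  by move/peq_psub0/pnull_opp/pnull_ext: Hr => Hr; apply/peq_psub0; apply: Hr => n;
     rewrite /pmul /popp; ring.
- apply: classified_LA_rotate.
  apply: (classified_LA_peq _ _ _ _ (@peq_oppK _ m) (@peq_oppK _ e)) => //.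
  apply: classified_L4_base => //; exists r; split=> //.
  by move/peq_psub0/pnull_ext: Hr => Hr; apply/peq_psub0; apply: Hr => n;
     rewrite /pmul /popp; ring.
Qed.

(* Generic case: the relations force b3 g3 = a1 a2 and then g3 = +-a2;
   g3 = a2 gives L_*(a1, a2, g1) and g3 = -a2 gives L_4(a1, a2, b2). *)
Lemma classified_generic p a1 a2 b2 b3 g1 g3 : prime p ->
  pZp_elt p a1 -> pZp_elt p a2 -> pZp_elt p b2 ->
  pZp_elt p b3 -> pZp_elt p g1 -> pZp_elt p g3 ->
  LA_jacobi_eqs p a1 a2 b2 b3 g1 g3 ->
  ~ pnull p a1 -> ~ pnull p a2 -> ~ pnull p b2 -> ~ pnull p g1 ->
  classified p (LA a1 a2 b2 b3 g1 g3).
Proof.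
move=> p_pr pa1 pa2 pb2 pb3 pg1 pg3 [J1 J2 J3] na1 na2 nb2 ng1.
have [ha1 ha2 hb2 hg1 hg3] := And5 pa1.1 pa2.1 pb2.1 pg1.1 pg3.1.
have hb3 := pb3.1.
have padic_psub x y : is_padic p x -> is_padic p y -> is_padic p (psub x y).
  by move=> hx hy; apply: padic_add hx (padic_opp hy).
have K : pnull p (psub (pmul b3 g3) (pmul a1 a2)).
  apply: (pnull_factor (u := popp g3) (v := a1) p_pr hg1 _ ng1 J1 J2).
    by apply: padic_psub; apply: padic_mul.
  by move=> n; rewrite /psub /padd /popp /pmul; ring.
have Q : pnull p (pmul (psub g3 a2) (padd g3 a2)).
  apply: (pnull_factor (u := g3) (v := a2) p_pr ha1 _ na1 J3 K).
    by apply: padic_mul; [apply: padic_psub | apply: padic_add].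
  by move=> n; rewrite /psub /padd /popp /pmul; ring.
have [E|F] := padic_domain p_pr (padic_psub _ _ hg3 ha2) (padic_add hg3 ha2) Q.
- have Eb3 : peq p b3 a1.
    apply/peq_pnull; apply: (pnull_factor (u := pconst (-1)) (v := a1) p_pr ha2 _ na2 J3 E).
      exact: padic_psub.
    by move=> n; rewrite /psub /padd /popp /pconst; ring.
  have Eb2 : peq p b2 g1.
    apply/peq_pnull; apply: (pnull_factor (u := pconst 1) (v := popp b2) p_pr ha2 _ na2 J2 E).
      exact: padic_psub.
    by move=> n; rewrite /psub /padd /popp /pconst; ring.
  have Eg3 : peq p g3 a2 by apply/peq_pnull.
  apply: (classified_LA_peq _ _ Eb2 Eb3 _ Eg3) => //.
  exact: classified_Lstar.
- have Fb3 : peq p b3 (popp a1).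
    apply/peq_pnull; apply: (pnull_factor (u := pconst (-1)) (v := a1) p_pr ha2 _ na2 J3 F).
      exact: padic_psub hb3 (padic_opp ha1).
    by move=> n; rewrite /padd /popp /pconst; ring.
  have Fg1 : peq p g1 (popp b2).
    apply/peq_pnull; apply: (pnull_factor (u := pconst (-1)) (v := b2) p_pr ha2 _ na2 J2 F).
      exact: padic_psub hg1 (padic_opp hb2).
    by move=> n; rewrite /padd /popp /pconst; ring.
  have Fg3 : peq p g3 (popp a2).
    by apply/peq_pnull; move/pnull_ext: F; apply=> n; rewrite /padd /popp opprK.
  apply: (classified_LA_peq _ _ _ Fb3 Fg1 Fg3) => //.
  exact: classified_L4.
Qed.

Theorem mainTheorem19 (p : nat) (a1 a2 b2 b3 g1 g3 : padic) :
  prime p -> odd p ->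
  pZp_elt p a1 -> pZp_elt p a2 -> pZp_elt p b2 -> pZp_elt p b3 ->
  pZp_elt p g1 -> pZp_elt p g3 ->
  jacobi p (LA a1 a2 b2 b3 g1 g3) ->
  exists eta rho mu lam : padic,
    pZp_elt p eta /\ pZp_elt p rho /\ pZp_elt p mu /\ pZp_elt p lam /\
    peq p (psub (pmul eta rho) (pmul mu lam)) pzero /\
    (lie_iso p (LA a1 a2 b2 b3 g1 g3) (L1 eta rho mu lam) \/
     lie_iso p (LA a1 a2 b2 b3 g1 g3) (L2 eta mu) \/
     lie_iso p (LA a1 a2 b2 b3 g1 g3) (L3 eta mu) \/
     (~ peq p (pmul eta (pmul mu lam)) pzero /\
      lie_iso p (LA a1 a2 b2 b3 g1 g3) (L4 eta mu lam)) \/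
     (~ peq p (pmul eta (pmul mu lam)) pzero /\
      lie_iso p (LA a1 a2 b2 b3 g1 g3) (Lstar eta mu lam))).
Proof.
move=> p_pr _ pa1 pa2 pb2 pb3 pg1 pg3 /jacobi_LA J; rewrite -/(classified _ _).
have J' := LA_jacobi_eqs_rotate J; have J'' := LA_jacobi_eqs_rotate J'.
have [[z1 z3]|n13] := classic (pnull p a1 /\ pnull p b3).
  exact: classified_degenerate.
have [[z2 z1]|n21] := classic (pnull p b2 /\ pnull p g1).
  by apply: classified_LA_rotate; apply: classified_degenerate.
have [[z3 z2]|n32] := classic (pnull p g3 /\ pnull p a2).
  by do 2 apply: classified_LA_rotate; apply: classified_degenerate.
have [na1 _] := LA_nondegenerate p_pr pa1.1 pa2.1 pb2.1 pb3.1 pg1.1 pg3.1 J n13 n21 n32.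
have [nb2 ng1] := LA_nondegenerate p_pr pb2.1 pb3.1 pg3.1 pg1.1 pa2.1 pa1.1 J' n21 n32 n13.
have [_ na2] := LA_nondegenerate p_pr pg3.1 pg1.1 pa1.1 pa2.1 pb3.1 pb2.1 J'' n32 n13 n21.
exact: classified_generic.
Qed.
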